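(* Let $x_1,\dots,x_n \in \mathbb{R}^d$, $w \in \mathbb{R}^d$ and $c \in \mathbb{R}$. If $F(w) \geq c$, then $G(w) \geq \frac{1 - \exp(-nc)}{n}$. If additionally $c \leq 1/n$, then $G(w) \geq c/2$.
   Context: $F(w) = \frac{1}{n}\sum_{i=1}^n \log(1+\exp(-\langle w, x_i\rangle))$ and $G(w) = \frac{1}{n}\sum_{i=1}^n \frac{1}{\exp(\langle w, x_i\rangle)+1}$. *)

From mathcomp Require Import all_boot all_order all_algebra.
From mathcomp Require Import all_classical all_reals all_analysis.
Set Implicit Arguments. Unset Strict Implicit. Unset Printing Implicit Defensive.
Import Order.TTheory GRing.Theory Num.Theory.
Local Open Scope ring_scope.

Definition dotp (R : realType) (d : nat) (u v : 'rV[R]_d) : R :=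
  \sum_(j < d) u 0 j * v 0 j.

Definition Floss (R : realType) (n d : nat) (x : 'I_n -> 'rV[R]_d) (w : 'rV[R]_d) : R :=
  n%:R^-1 * \sum_(i < n) ln (1 + expR (- dotp w (x i))).

Definition Gfun (R : realType) (n d : nat) (x : 'I_n -> 'rV[R]_d) (w : 'rV[R]_d) : R :=
  n%:R^-1 * \sum_(i < n) (expR (dotp w (x i)) + 1)^-1.

From mathcomp Require Import all_boot all_order all_algebra.
From mathcomp Require Import all_classical all_reals all_analysis.
From mathcomp Require Import ring lra.
Import Order.TTheory GRing.Theory Num.Theory.
Local Open Scope ring_scope.

(* Each summand of G is 1 - exp(-l) where l >= 0 is the matching summand of F.
   Since t |-> 1 - exp(-t) is subadditive on [0, oo), n G >= 1 - exp(-n F), which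
   gives the first bound; on [0, 1] it dominates t/2, which gives the second. *)

Section OnemExpRN.
Context {R : realType}.

Lemma invr_expRD1E (z : R) : (expR z + 1)^-1 = 1 - expR (- ln (1 + expR (- z))).
Proof.
have pos_z := expR_gt0 z.
have pos_1D : 0 < 1 + expR (- z) by rewrite addr_gt0 ?expR_gt0.
rewrite expRN lnK ?posrE // expRN.
by field; rewrite gt_eqF //= gt_eqF //; lra.
Qed.

Lemma ln_1DexpR_ge0 (z : R) : 0 <= ln (1 + expR z).
Proof. by apply: ln_ge0; have := expR_gt0 z; lra. Qed.

Lemma onem_expRN_subadd (a b : R) : 0 <= a -> 0 <= b ->
  1 - expR (- (a + b)) <= (1 - expR (- a)) + (1 - expR (- b)).
Proof.
move=> a_ge0 b_ge0.
have ea_le1 : expR (- a) <= 1 by rewrite expR_le1 oppr_le0.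
have eb_le1 : expR (- b) <= 1 by rewrite expR_le1 oppr_le0.
have ea_gt0 := expR_gt0 (- a); have eb_gt0 := expR_gt0 (- b).
rewrite opprD expRD; nra.
Qed.

Lemma onem_expRN_sum_le (I : Type) (r : seq I) (P : pred I) (a : I -> R) :
  (forall i, P i -> 0 <= a i) ->
  1 - expR (- \sum_(i <- r | P i) a i) <= \sum_(i <- r | P i) (1 - expR (- a i)).
Proof.
move=> a_ge0; elim: r => [|i r IHr]; first by rewrite !big_nil oppr0 expR0 subrr.
rewrite !big_cons; case: ifP => // Pi.
have sum_ge0 : 0 <= \sum_(j <- r | P j) a j by apply: sumr_ge0.
by apply: le_trans (onem_expRN_subadd _ _ (a_ge0 _ Pi) sum_ge0) _; rewrite lerD2l.
Qed.

Lemma onem_expRN_ge_half (t : R) : 0 <= t -> t <= 1 -> t / 2 <= 1 - expR (- t).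
Proof.
move=> t_ge0 t_le1.
have sq_le_expR : (1 + t / 2) ^+ 2 <= expR t.
  rewrite [X in expR X]splitr expRD expr2.
  by apply: ler_pM; rewrite ?expR_ge1Dx //; lra.
have et_gt0 := expR_gt0 t.
rewrite expRN -subr_ge0.
have -> : 1 - (expR t)^-1 - t / 2 = ((1 - t / 2) * expR t - 1) / expR t.
  by field; apply/eqP; lra.
(* (1 - t/2) (1 + t/2)^2 >= 1 exactly when t/4 + t^2/8 <= 1/2. *)
by apply: divr_ge0; rewrite expr2 in sq_le_expR; nra.
Qed.

End OnemExpRN.

Section LogisticLoss.
Context {R : realType} {n d : nat} (x : 'I_n -> 'rV[R]_d) (w : 'rV[R]_d).

Lemma Gfun_ge0 : 0 <= Gfun x w.
Proof.
apply: mulr_ge0; first by rewrite invr_ge0.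
apply: sumr_ge0 => i _; rewrite invr_ge0.
by have := expR_gt0 (dotp w (x i)); lra.
Qed.

Lemma onem_expRN_Floss_le_Gfun : (0 < n)%N ->
  (1 - expR (- (n%:R * Floss x w))) / n%:R <= Gfun x w.
Proof.
move=> n_gt0; have N_gt0 : 0 < n%:R :> R by rewrite ltr0n.
rewrite /Gfun /Floss mulrA divff ?gt_eqF // mul1r mulrC ler_pM2l ?invr_gt0 //.
rewrite (eq_bigr _ (fun i _ => invr_expRD1E (dotp w (x i)))).
by apply: onem_expRN_sum_le => i _; apply: ln_1DexpR_ge0.
Qed.

End LogisticLoss.

Theorem lemma15 (R : realType) (n d : nat) (hn : (0 < n)%N)
  (x : 'I_n -> 'rV[R]_d) (w : 'rV[R]_d) (c : R) :
  (c <= Floss x w -> (1 - expR (- (n%:R * c))) / n%:R <= Gfun x w) /\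
  (c <= Floss x w -> c <= n%:R^-1 -> c / 2 <= Gfun x w).
Proof.
have N_gt0 : 0 < n%:R :> R by rewrite ltr0n.
have bound1 : c <= Floss x w -> (1 - expR (- (n%:R * c))) / n%:R <= Gfun x w.
  move=> c_le_F; apply: le_trans (onem_expRN_Floss_le_Gfun x w hn).
  by rewrite ler_pM2r ?invr_gt0 // lerD2l lerN2 ler_expR lerN2 ler_pM2l.
split=> // c_le_F c_le_invn.
have [c_le0|c_gt0] := lerP c 0; first by apply: le_trans (Gfun_ge0 x w); lra.
apply: le_trans (bound1 c_le_F).
have nc_le1 : n%:R * c <= 1 by rewrite mulrC -ler_pdivlMr // div1r.
have := onem_expRN_ge_half _ (mulr_ge0 (ltW N_gt0) (ltW c_gt0)) nc_le1.
have -> : c / 2 = (n%:R * c / 2) / n%:R by field; exact: lt0r_neq0.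
by rewrite ler_pM2r ?invr_gt0.
Qed.
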